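(* Let $\mathbf W\in\mathbb R^{p\times d}$ and let $\sigma_1,\ldots,\sigma_p\in C^{0,1}_{\uparrow}(\mathbb R)$. Let $L_\theta$ denote the Lipschitz constant of $\mathbf x\mapsto\mathbf W^T\boldsymbol\sigma(\mathbf W\mathbf x)$, where $(\boldsymbol\sigma(\mathbf z))_i=\sigma_i(z_i)$. With $\boldsymbol\Sigma_\infty=\mathrm{diag}(\|\sigma_1'\|_\infty,\ldots,\|\sigma_p'\|_\infty)$ it holds that $$L_\theta\le\|\mathbf W^T\boldsymbol\Sigma_\infty\mathbf W\|=\|\sqrt{\boldsymbol\Sigma_\infty}\,\mathbf W\|^2\le L_{\boldsymbol\sigma}\|\mathbf W\|^2,$$ where $L_{\boldsymbol\sigma}=\max_i\mathrm{Lip}(\sigma_i)$ is the Lipschitz constant of $\boldsymbol\sigma$ and $\|\cdot\|$ is the spectral norm.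
   Context: $C^{0,1}_{\uparrow}(\mathbb R)$ denotes the set of Lipschitz-continuous increasing functions $\mathbb R\to\mathbb R$; for such $\sigma_i$, $\|\sigma_i'\|_\infty$ is the essential supremum of its derivative, i.e. its Lipschitz constant. *)

From HB Require Import structures.
From mathcomp Require Import all_boot all_order all_algebra.
From mathcomp Require Import all_classical all_reals.
Set Implicit Arguments. Unset Strict Implicit. Unset Printing Implicit Defensive.
Import Order.TTheory GRing.Theory Num.Theory.
Local Open Scope ring_scope.
Local Open Scope classical_set_scope.

Section Defs.
Variable R : realType.

Definition vnorm n (x : 'cV[R]_n) : R := Num.sqrt (\sum_i (x i 0) ^+ 2).

Definition specnorm m n (A : 'M[R]_(m, n)) : R :=
  sup [set vnorm (A *m x) | x in [set x : 'cV[R]_n | vnorm x <= 1]].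

Definition lipschitz_bound m n (f : 'cV[R]_n -> 'cV[R]_m) (L : R) : Prop :=
  0 <= L /\ forall x y, vnorm (f x - f y) <= L * vnorm (x - y).
Definition lipconst m n (f : 'cV[R]_n -> 'cV[R]_m) : R :=
  inf [set L | lipschitz_bound f L].

Definition lipschitz_bound1 (f : R -> R) (L : R) : Prop :=
  0 <= L /\ forall x y, `|f x - f y| <= L * `|x - y|.
Definition lipconst1 (f : R -> R) : R := inf [set L | lipschitz_bound1 f L].

Definition lip_incr (f : R -> R) : Prop :=
  (exists L, lipschitz_bound1 f L) /\ {homo f : x y / x <= y}.

Definition sigmav p (sigma : 'I_p -> R -> R) (z : 'cV[R]_p) : 'cV[R]_p :=
  \col_i sigma i (z i 0).

(* Sigma_infty = diag(||sigma_i'||_infty) = diag(Lip(sigma_i)) *)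
Definition Sigma_inf p (sigma : 'I_p -> R -> R) : 'M[R]_p :=
  diag_mx (\row_i lipconst1 (sigma i)).
Definition sqrt_Sigma_inf p (sigma : 'I_p -> R -> R) : 'M[R]_p :=
  diag_mx (\row_i Num.sqrt (lipconst1 (sigma i))).

Definition Lsigma p (sigma : 'I_p -> R -> R) : R :=
  \big[Num.max/0]_(i < p) lipconst1 (sigma i).
End Defs.

From HB Require Import structures.
From mathcomp Require Import all_boot all_order all_algebra.
From mathcomp Require Import all_classical all_reals.
From mathcomp Require Import ring lra.
Import Order.TTheory GRing.Theory Num.Theory.
Local Open Scope ring_scope.

Set Implicit Arguments.
Unset Strict Implicit.
Unset Printing Implicit Defensive.

(* Each sigma_i is nondecreasing and Lipschitz, so its difference quotients
   lie in [0, Lip(sigma_i)]; hence sigma(Wx) - sigma(Wy) = D W (x - y) for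
   a diagonal D = diag(q) with 0 <= q_i <= Lip(sigma_i).  Writing
   M = sqrt(D) W, the difference of the outputs is M^T M (x - y), and the
   C*-identity ||M^T M|| = ||M||^2 together with
   ||sqrt(D) W|| <= ||sqrt(Sigma_inf) W|| bounds the Lipschitz constant.
   The same C*-identity applied to sqrt(Sigma_inf) W gives the middle
   equality, and sqrt(Sigma_inf) is entrywise dominated by sqrt(L_sigma) I,
   which gives the last bound. *)

Section EuclideanNorm.
Variables (R : realType) (n : nat).
Implicit Types (x y : 'cV[R]_n).

Definition dot x y : R := (x^T *m y) 0 0.

Lemma dotE x y : dot x y = \sum_i x i 0 * y i 0.
Proof. by rewrite /dot mxE; apply: eq_bigr => i _; rewrite mxE. Qed.

Lemma dot_ge0 x : 0 <= dot x x.
Proof. by rewrite dotE; apply: sumr_ge0 => i _; rewrite -expr2 sqr_ge0. Qed.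

Lemma dot_eq0 x : dot x x = 0 -> x = 0.
Proof.
rewrite dotE => /eqP; rewrite psumr_eq0 => [/allP x0|i _]; last first.
  by rewrite -expr2 sqr_ge0.
apply/matrixP => i j; rewrite (ord1 j) mxE.
by have /= := x0 i (mem_index_enum _); rewrite mulf_eq0 orbb => /eqP.
Qed.

Lemma dotx0 x : dot x 0 = 0.
Proof. by rewrite /dot mulmx0 mxE. Qed.

Lemma dot_lincomb a b x y :
  dot (a *: x + b *: y) (a *: x + b *: y)
  = a ^+ 2 * dot x x + 2 * a * b * dot x y + b ^+ 2 * dot y y.
Proof.
rewrite !dotE !mulr_sumr -!big_split /=; apply: eq_bigr => i _.
by rewrite !mxE; ring.
Qed.

Lemma vnorm_sqr x : vnorm x ^+ 2 = dot x x.
Proof.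
rewrite /vnorm sqr_sqrtr ?dotE; last by apply: sumr_ge0 => i _; rewrite sqr_ge0.
by under eq_bigr do rewrite expr2.
Qed.

Lemma vnormE x : vnorm x = Num.sqrt (dot x x).
Proof. by rewrite -vnorm_sqr sqrtr_sqr ger0_norm ?sqrtr_ge0. Qed.

Lemma vnorm_ge0 x : 0 <= vnorm x.
Proof. exact: sqrtr_ge0. Qed.

Lemma vnorm0 : vnorm (0 : 'cV[R]_n) = 0.
Proof. by rewrite vnormE dotE big1 ?sqrtr0 // => i _; rewrite mxE mul0r. Qed.

Lemma vnorm_eq0 x : vnorm x = 0 -> x = 0.
Proof. by move=> x0; apply: dot_eq0; rewrite -vnorm_sqr x0 expr0n. Qed.

Lemma dotZ a x : dot (a *: x) (a *: x) = a ^+ 2 * dot x x.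
Proof. by rewrite !dotE mulr_sumr; apply: eq_bigr => i _; rewrite !mxE; ring. Qed.

Lemma vnormZ a x : vnorm (a *: x) = `|a| * vnorm x.
Proof. by rewrite !vnormE dotZ sqrtrM ?sqr_ge0 // sqrtr_sqr. Qed.

Lemma CauchySchwarz_dot x y : dot x y ^+ 2 <= dot x x * dot y y.
Proof.
have [y0|y_neq0] := eqVneq (dot y y) 0.
  by rewrite y0 (dot_eq0 y0) dotx0 mulr0 expr0n.
have y_gt0 : 0 < dot y y by rewrite lt_def y_neq0 dot_ge0.
(* |<y,y> x - <x,y> y|^2 = <y,y> (<x,x> <y,y> - <x,y>^2) *)
have := dot_ge0 (dot y y *: x + (- dot x y) *: y).
rewrite dot_lincomb; nra.
Qed.

Lemma dot_le_vnorm x y : dot x y <= vnorm x * vnorm y.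
Proof.
have nn : 0 <= vnorm x * vnorm y by rewrite mulr_ge0 ?vnorm_ge0.
have [xy_le0|xy_gt0] := lerP (dot x y) 0; first exact: le_trans xy_le0 nn.
rewrite -(ler_sqr (ltW xy_gt0) nn) ?nnegrE ?(ltW xy_gt0) // exprMn !vnorm_sqr.
exact: CauchySchwarz_dot.
Qed.

End EuclideanNorm.

Section SpectralNorm.
Variable R : realType.
Local Open Scope classical_set_scope.

Lemma dot_mulmx m n (A : 'M[R]_(m, n)) (x : 'cV_n) y : dot (A *m x) y = dot x (A^T *m y).
Proof. by rewrite /dot trmx_mul mulmxA. Qed.

Lemma vnorm_mulmx_bounded m n (A : 'M[R]_(m, n)) :
  exists2 c, 0 <= c & forall x, vnorm (A *m x) <= c * vnorm x.
Proof.
pose rowA i : 'cV[R]_n := (row i A)^T.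
have rowAE i x : (A *m x) i 0 = dot (rowA i) x.
  by rewrite mxE dotE; apply: eq_bigr => j _; rewrite !mxE.
have rows_ge0 : 0 <= \sum_i dot (rowA i) (rowA i).
  by apply: sumr_ge0 => i _; apply: dot_ge0.
exists (Num.sqrt (\sum_i dot (rowA i) (rowA i))) => [|x]; first exact: sqrtr_ge0.
rewrite !vnormE -sqrtrM // ler_sqrt ?mulr_ge0 ?dot_ge0 // dotE mulr_suml.
by apply: ler_sum => i _; rewrite rowAE -expr2 CauchySchwarz_dot.
Qed.

Lemma specnorm_has_sup m n (A : 'M[R]_(m, n)) :
  has_sup [set vnorm (A *m x) | x in [set x | vnorm x <= 1]].
Proof.
split; first by exists (vnorm (A *m 0)), 0 => //=; rewrite vnorm0.
have [c c_ge0 Ac] := vnorm_mulmx_bounded A.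
by exists c => _ [x /= x_le1 <-]; apply: le_trans (Ac x) _; rewrite ler_piMr.
Qed.

Lemma specnorm_ge0 m n (A : 'M[R]_(m, n)) : 0 <= specnorm A.
Proof.
apply: le_trans (sup_upper_bound (specnorm_has_sup A) _); first exact: vnorm_ge0 (A *m 0).
by exists 0 => //=; rewrite vnorm0.
Qed.

Lemma vnorm_mulmx_le m n (A : 'M[R]_(m, n)) (x : 'cV_n) :
  vnorm (A *m x) <= specnorm A * vnorm x.
Proof.
have [x0|x_neq0] := eqVneq (vnorm x) 0.
  by rewrite (vnorm_eq0 x0) mulmx0 !vnorm0 mulr0.
have x_gt0 : 0 < vnorm x by rewrite lt_def x_neq0 vnorm_ge0.
have x_unit : vnorm (A *m ((vnorm x)^-1 *: x)) <= specnorm A.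
  apply: sup_upper_bound (specnorm_has_sup A) _ _; exists ((vnorm x)^-1 *: x) => //=.
  by rewrite vnormZ ger0_norm ?invr_ge0 ?vnorm_ge0 // mulVf.
move: x_unit; rewrite -scalemxAr vnormZ ger0_norm ?invr_ge0 ?vnorm_ge0 //.
by rewrite -ler_pdivrMr // mulrC.
Qed.

Lemma specnorm_le m n (A : 'M[R]_(m, n)) c :
  0 <= c -> (forall x, vnorm (A *m x) <= c * vnorm x) -> specnorm A <= c.
Proof.
move=> c_ge0 Ac; apply: ge_sup; first by exists (vnorm (A *m 0)), 0 => //=; rewrite vnorm0.
by move=> _ [x /= x_le1 <-]; apply: le_trans (Ac x) _; rewrite ler_piMr.
Qed.

Lemma specnormZ_le m n a (A : 'M[R]_(m, n)) : specnorm (a *: A) <= `|a| * specnorm A.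
Proof.
apply: specnorm_le => [|x]; first by rewrite mulr_ge0 ?specnorm_ge0.
by rewrite -scalemxAl vnormZ -mulrA ler_wpM2l ?vnorm_mulmx_le.
Qed.

Lemma specnorm_mulmx_le m n p (A : 'M[R]_(m, n)) (B : 'M[R]_(p, m)) :
  specnorm (B *m A) <= specnorm B * specnorm A.
Proof.
apply: specnorm_le => [|x]; first by rewrite mulr_ge0 ?specnorm_ge0.
rewrite -mulmxA -mulrA; apply: le_trans (vnorm_mulmx_le _ _) _.
by rewrite ler_wpM2l ?specnorm_ge0 ?vnorm_mulmx_le.
Qed.

Lemma specnorm_trmx_le m n (A : 'M[R]_(m, n)) : specnorm A^T <= specnorm A.
Proof.
apply: specnorm_le => [|y]; first exact: specnorm_ge0.
have : vnorm (A^T *m y) ^+ 2 <= specnorm A * vnorm y * vnorm (A^T *m y).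
  rewrite vnorm_sqr -dot_mulmx; apply: le_trans (dot_le_vnorm _ _) _.
  by rewrite mulrAC ler_wpM2r ?vnorm_ge0 ?vnorm_mulmx_le.
have := vnorm_ge0 (A^T *m y); have := mulr_ge0 (specnorm_ge0 A) (vnorm_ge0 y).
nra.
Qed.

Lemma specnorm_gram m n (A : 'M[R]_(m, n)) :
  specnorm (A^T *m A) = specnorm A ^+ 2.
Proof.
apply/eqP; rewrite eq_le; apply/andP; split.
  apply: le_trans (specnorm_mulmx_le _ _) _.
  by rewrite expr2 ler_wpM2r ?specnorm_ge0 ?specnorm_trmx_le.
rewrite -(sqr_sqrtr (specnorm_ge0 (A^T *m A))).
rewrite ler_sqr ?nnegrE ?specnorm_ge0 ?sqrtr_ge0 //.
apply: specnorm_le => [|x]; first exact: sqrtr_ge0.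
rewrite -ler_sqr ?nnegrE ?mulr_ge0 ?sqrtr_ge0 ?vnorm_ge0 //.
rewrite exprMn (sqr_sqrtr (specnorm_ge0 _)) vnorm_sqr dot_mulmx mulmxA.
apply: le_trans (dot_le_vnorm _ _) _.
by rewrite mulrC expr2 mulrA ler_wpM2r ?vnorm_ge0 ?vnorm_mulmx_le.
Qed.

End SpectralNorm.

Section Diagonal.
Variable R : realType.

Lemma vnorm_diag_mx_le n (r s : 'rV[R]_n) (x : 'cV[R]_n) :
  (forall i, r 0 i ^+ 2 <= s 0 i ^+ 2) ->
  vnorm (diag_mx r *m x) <= vnorm (diag_mx s *m x).
Proof.
move=> rs; rewrite /vnorm ler_sqrt; last by apply: sumr_ge0 => i _; rewrite sqr_ge0.
by apply: ler_sum => i _; rewrite !mul_diag_mx !mxE !exprMn ler_wpM2r ?sqr_ge0.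
Qed.

Lemma specnorm_diag_mulmx_le m n (r s : 'rV[R]_m) (A : 'M[R]_(m, n)) :
  (forall i, r 0 i ^+ 2 <= s 0 i ^+ 2) ->
  specnorm (diag_mx r *m A) <= specnorm (diag_mx s *m A).
Proof.
move=> rs; apply: specnorm_le => [|x]; first exact: specnorm_ge0.
rewrite -mulmxA; apply: le_trans (vnorm_diag_mx_le _ rs) _.
by rewrite mulmxA vnorm_mulmx_le.
Qed.

Lemma gram_diag_sqrt_mulmx m n (r : 'I_m -> R) (A : 'M[R]_(m, n)) :
  (forall i, 0 <= r i) ->
  (diag_mx (\row_i Num.sqrt (r i)) *m A)^T *m (diag_mx (\row_i Num.sqrt (r i)) *m A)
  = A^T *m diag_mx (\row_i r i) *m A.
Proof.
move=> r_ge0; rewrite trmx_mul tr_diag_mx !mulmxA -(mulmxA _ _ (diag_mx _)).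
rewrite mulmx_diag; congr (_ *m diag_mx _ *m _).
apply/matrixP => i j; rewrite (ord1 i) !mxE.
by rewrite -expr2 sqr_sqrtr.
Qed.

End Diagonal.

Section Lipschitz.
Variable R : realType.

Lemma lipconst_le m n (f : 'cV[R]_n -> 'cV[R]_m) L :
  lipschitz_bound f L -> lipconst f <= L.
Proof. by move=> fL; apply: ge_inf fL; exists 0 => M []. Qed.

Variable f : R -> R.
Hypothesis f_lip : exists L, lipschitz_bound1 f L.

Lemma lipconst1_ge0 : 0 <= lipconst1 f.
Proof. by have [L fL] := f_lip; apply: lb_le_inf => [|M []]; first exists L. Qed.

Lemma lipschitz_bound1_lipconst1 : lipschitz_bound1 f (lipconst1 f).
Proof.
split=> [|a b]; first exact: lipconst1_ge0.
have [->|a_neq_b] := eqVneq a b; first by rewrite !subrr normr0 mulr0.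
have ab_gt0 : 0 < `|a - b| by rewrite normr_gt0 subr_eq0.
rewrite -ler_pdivrMr //; apply: lb_le_inf; first by have [L fL] := f_lip; exists L.
by move=> L [_ fL]; rewrite ler_pdivrMr.
Qed.

Hypothesis f_incr : {homo f : x y / x <= y}.

Lemma secant_incr_lip a b :
  exists2 q, 0 <= q <= lipconst1 f & f a - f b = q * (a - b).
Proof.
wlog ba : a b / b <= a => [hwlog|].
  have [/hwlog //|/ltW /hwlog [q q_range fba]] := lerP b a.
  by exists q => //; rewrite -opprB fba -mulrN opprB.
have [->|a_neq_b] := eqVneq a b.
  by exists 0; rewrite ?lexx ?lipconst1_ge0 // !subrr mul0r.
have ab_gt0 : 0 < a - b by rewrite subr_gt0 lt_def a_neq_b ba.
exists ((f a - f b) / (a - b)); last by rewrite divfK // gt_eqF.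
rewrite divr_ge0 ?subr_ge0 ?f_incr //= ler_pdivrMr //.
have [_ /(_ a b)] := lipschitz_bound1_lipconst1.
by rewrite !ger0_norm ?subr_ge0 ?f_incr.
Qed.

End Lipschitz.

Section Activation.
Variables (R : realType) (p : nat) (sigma : 'I_p -> R -> R).

Lemma Lsigma_ge0 : 0 <= Lsigma sigma.
Proof. exact: bigmax_ge_id. Qed.

Lemma lipconst1_le_Lsigma i : lipconst1 (sigma i) <= Lsigma sigma.
Proof. exact: (le_bigmax _ (fun i => lipconst1 (sigma i))). Qed.

Hypothesis sigma_incr_lip : forall i, lip_incr (sigma i).

Lemma lipconst1_sigma_ge0 i : 0 <= lipconst1 (sigma i).
Proof. by case: (sigma_incr_lip i) => /lipconst1_ge0. Qed.

Lemma sigmav_secant (a b : 'cV[R]_p) :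
  exists2 q : 'I_p -> R, (forall i, 0 <= q i <= lipconst1 (sigma i))
    & sigmav sigma a - sigmav sigma b = diag_mx (\row_i q i) *m (a - b).
Proof.
have : forall i, exists q, (0 <= q <= lipconst1 (sigma i))
    /\ sigma i (a i 0) - sigma i (b i 0) = q * (a i 0 - b i 0).
  move=> i; case: (sigma_incr_lip i) => lip incr.
  by have [q ? ?] := secant_incr_lip lip incr (a i 0) (b i 0); exists q.
case/choice => q qP; exists q => [i|]; first by case: (qP i).
by apply/matrixP => i j; rewrite (ord1 j) mul_diag_mx !mxE; case: (qP i).
Qed.

Lemma Sigma_inf_gram d (W : 'M[R]_(p, d)) :
  W^T *m Sigma_inf sigma *m W
  = (sqrt_Sigma_inf sigma *m W)^T *m (sqrt_Sigma_inf sigma *m W).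
Proof. by apply/esym/gram_diag_sqrt_mulmx => i; apply: lipconst1_sigma_ge0. Qed.

Lemma specnorm_sqrt_Sigma_inf_le d (W : 'M[R]_(p, d)) :
  specnorm (sqrt_Sigma_inf sigma *m W) <= Num.sqrt (Lsigma sigma) * specnorm W.
Proof.
pose c := Num.sqrt (Lsigma sigma).
apply: (@le_trans _ _ (specnorm (diag_mx (const_mx c) *m W))).
  apply: specnorm_diag_mulmx_le => i.
  rewrite !mxE !sqr_sqrtr ?Lsigma_ge0 ?lipconst1_sigma_ge0 //.
  exact: lipconst1_le_Lsigma.
rewrite diag_const_mx mul_scalar_mx; apply: le_trans (specnormZ_le _ _) _.
by rewrite ger0_norm ?sqrtr_ge0.
Qed.

Lemma lipschitz_bound_WT_sigma_W d (W : 'M[R]_(p, d)) :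
  lipschitz_bound (fun x : 'cV[R]_d => W^T *m sigmav sigma (W *m x))
    (specnorm (sqrt_Sigma_inf sigma *m W) ^+ 2).
Proof.
split=> [|x y]; first exact: sqr_ge0.
have [q q_range secant] := sigmav_secant (W *m x) (W *m y).
have q_ge0 i : 0 <= q i by case/andP: (q_range i).
pose M := diag_mx (\row_i Num.sqrt (q i)) *m W.
have -> : W^T *m sigmav sigma (W *m x) - W^T *m sigmav sigma (W *m y)
          = M^T *m M *m (x - y).
  by rewrite /M gram_diag_sqrt_mulmx // -mulmxBr secant -mulmxBr !mulmxA.
have M_le : specnorm M <= specnorm (sqrt_Sigma_inf sigma *m W).
  apply: specnorm_diag_mulmx_le => i.
  rewrite !mxE !sqr_sqrtr ?lipconst1_sigma_ge0 //.
  by case/andP: (q_range i).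
apply: le_trans (vnorm_mulmx_le _ _) _.
by rewrite specnorm_gram ler_wpM2r ?vnorm_ge0 // ler_sqr ?nnegrE ?specnorm_ge0.
Qed.

End Activation.

Theorem proposition5 (R : realType) (p d : nat) (W : 'M[R]_(p, d))
  (sigma : 'I_p -> R -> R) (hsigma : forall i, lip_incr (sigma i)) :
  let L_theta := lipconst (fun x : 'cV[R]_d => W^T *m sigmav sigma (W *m x)) in
  L_theta <= specnorm (W^T *m Sigma_inf sigma *m W)
  /\ specnorm (W^T *m Sigma_inf sigma *m W) = specnorm (sqrt_Sigma_inf sigma *m W) ^+ 2
  /\ specnorm (sqrt_Sigma_inf sigma *m W) ^+ 2 <= Lsigma sigma * specnorm W ^+ 2.
Proof.
move=> L_theta.
have gram : specnorm (W^T *m Sigma_inf sigma *m W)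
            = specnorm (sqrt_Sigma_inf sigma *m W) ^+ 2.
  by rewrite Sigma_inf_gram // specnorm_gram.
split; last split => //.
  by rewrite gram; apply/lipconst_le/lipschitz_bound_WT_sigma_W.
have := specnorm_sqrt_Sigma_inf_le hsigma W.
rewrite -ler_sqr ?nnegrE ?mulr_ge0 ?sqrtr_ge0 ?specnorm_ge0 //.
by rewrite exprMn sqr_sqrtr ?Lsigma_ge0.
Qed.
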